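(* Let $\mathcal{H}$ be a finite-dimensional Hilbert space, $\ket{h}\in\mathcal{H}$ a unit vector, and $W_1,\ldots,W_l$ subspaces of $\mathcal{H}$. Let $0<\alpha_j<1$ for $j\in[l]$, set $\alpha:=\min_j\alpha_j$ and $\epsilon_j:=\|\Pi_{W_j}\ket{h}\|_2^2$. Let $\mathbf{W}_{(\alpha_1,\ldots,\alpha_l)}$ be the $(\alpha_1,\ldots,\alpha_l)$-tilted span of $W_1,\ldots,W_l$ (defined in the context), and view $\ket h$ as a vector of $\tilde{\mathcal{H}}$ via the identity embedding. Then $$\max_{j\in[l]}(1-\alpha_j)\epsilon_j\ \le\ \|\Pi_{\mathbf{W}_{(\alpha_1,\ldots,\alpha_l)}}\ket{h}\|_2^2\ \le\ \frac{1-\alpha}{\alpha}\sum_{j=1}^l\epsilon_j.$$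
   Context: Tilted span: Let $\mathcal{H}_1,\ldots,\mathcal{H}_l$ be Hilbert spaces each of dimension $\dim\mathcal{H}$, and $\tilde{\mathcal{H}}:=\mathcal{H}\oplus\mathcal{H}_1\oplus\cdots\oplus\mathcal{H}_l$ (orthogonal direct sum). Let $\mathcal{T}_j$ be a linear map taking $\mathcal{H}$ isometrically onto $\mathcal{H}_j$. For $0<\alpha_j<1$ define the isometric embedding $\mathcal{T}_{j,\alpha_j}:=\sqrt{1-\alpha_j}\,\mathbb{1}_{\mathcal{H}}+\sqrt{\alpha_j}\,\mathcal{T}_j:\mathcal{H}\to\tilde{\mathcal{H}}$, where $\mathbb{1}_{\mathcal{H}}$ is the identity embedding of $\mathcal{H}$ into $\tilde{\mathcal{H}}$. For subspaces $W_1,\dots,W_l\le\mathcal{H}$, the $(\alpha_1,\ldots,\alpha_l)$-tilted span is the subspace $\mathbf{W}_{(\alpha_1,\ldots,\alpha_l)}:=\sum_{j=1}^l\mathcal{T}_{j,\alpha_j}(W_j)\le\tilde{\mathcal{H}}$ (a sum, not necessarily direct); if all $\alpha_j=\alpha$ it is written $\mathbf{W}_\alpha$. $\Pi_X$ denotes the orthogonal projection onto a subspace $X$. *)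

From HB Require Import structures.
From mathcomp Require Import all_boot all_order all_algebra all_field.
Set Implicit Arguments. Unset Strict Implicit. Unset Printing Implicit Defensive.
Import Order.TTheory GRing.Theory Num.Theory.
Local Open Scope ring_scope.

(* Finite-dimensional Hilbert spaces are modelled as row spaces 'rV[algC]_n with
   the standard inner product <u,v> = \sum_i u_i * conj(v_i).  Subspaces are
   mxalgebra row spaces (matrices, read with %MS).  Linear maps act on the
   right of row vectors. *)

Definition adjmx (m n : nat) (A : 'M[algC]_(m, n)) : 'M[algC]_(n, m) :=
  (map_mx Num.conj A)^T.

Definition norm2 (n : nat) (v : 'rV[algC]_n) : algC :=
  \sum_(i < n) `|v 0 i| ^+ 2.

Definition orth_proj (m n : nat) (X : 'M[algC]_(m, n)) : 'M[algC]_n :=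
  let B := row_base X in
  adjmx B *m invmx (B *m adjmx B) *m B.

(* A matrix E : 'M_(n, m) is an isometric embedding 'rV_n -> 'rV_m, x |-> x *m E *)
Definition isometry_mx (n m : nat) (E : 'M[algC]_(n, m)) : Prop :=
  E *m adjmx E = 1%:M.

Definition tilted_map (n m : nat) (E T : 'M[algC]_(n, m)) (a : algC)
  : 'M[algC]_(n, m) :=
  sqrtC (1 - a) *: E + sqrtC a *: T.

Definition tilted_span (n m l : nat) (E : 'M[algC]_(n, m))
  (T : 'I_l -> 'M[algC]_(n, m)) (a : 'I_l -> algC) (W : 'I_l -> 'M[algC]_n)
  : 'M[algC]_m :=
  (\sum_(j < l) <<W j *m tilted_map E (T j) (a j)>>)%MS.

(* Write [G_j] for the tilted embedding [T_{j,alpha_j}].  Since [E], [T_1], ..., [T_l] have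
   mutually orthogonal ranges, [<h E, w G_j> = sqrt(1 - alpha_j) <h, w>] and
   [G_i G_j^* = sqrt((1 - alpha_i)(1 - alpha_j)) + [i = j] alpha_j].
   Lower bound: [v = (Pi_{W_j} h) G_j] lies in the tilted span, has norm^2 [eps_j] and
   [<h E, v> = sqrt(1 - alpha_j) eps_j]; Cauchy-Schwarz against the projection [q] of [h E]
   gives [(1 - alpha_j) eps_j^2 <= |q|^2 eps_j].
   Upper bound: write [q = sum_j w_j G_j] with [w_j] in [W_j].  Then
   [|q|^2 = <h E, q> = sum_j sqrt(1 - alpha_j) <h, w_j>], while the Gram identity gives
   [|q|^2 >= sum_j alpha_j |w_j|^2].  As [|<h, w_j>|^2 <= eps_j |w_j|^2], AM-GM bounds
   [2 sqrt(1 - alpha_j) |<h, w_j>|] by [(1 - alpha_j)/alpha_j eps_j + alpha_j |w_j|^2],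
   and summing yields [2 |q|^2 <= sum_j (1 - alpha_j)/alpha_j eps_j + |q|^2]. *)
From HB Require Import structures.
From mathcomp Require Import all_boot all_order all_algebra all_field.
From mathcomp.algebra_tactics Require Import ring.
Import Order.TTheory GRing.Theory Num.Theory.
Local Open Scope ring_scope.
Set Implicit Arguments. Unset Strict Implicit. Unset Printing Implicit Defensive.

Lemma adjmxE m n (A : 'M[algC]_(m, n)) i j : adjmx A i j = (A j i)^*.
Proof. by rewrite /adjmx !mxE. Qed.

Lemma adjmxM m n p (A : 'M[algC]_(m, n)) (B : 'M[algC]_(n, p)) :
  adjmx (A *m B) = adjmx B *m adjmx A.
Proof. by rewrite /adjmx map_mxM trmx_mul. Qed.

Lemma adjmxK m n (A : 'M[algC]_(m, n)) : adjmx (adjmx A) = A.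
Proof. by apply/matrixP => i j; rewrite /adjmx !mxE conjCK. Qed.

Lemma adjmxD m n (A B : 'M[algC]_(m, n)) : adjmx (A + B) = adjmx A + adjmx B.
Proof. by apply/matrixP => i j; rewrite /adjmx !mxE rmorphD. Qed.

Lemma adjmxZ m n c (A : 'M[algC]_(m, n)) : adjmx (c *: A) = c^* *: adjmx A.
Proof. by apply/matrixP => i j; rewrite /adjmx !mxE rmorphM. Qed.

Lemma adjmx0 m n : adjmx (0 : 'M[algC]_(m, n)) = 0.
Proof. by apply/matrixP => i j; rewrite /adjmx !mxE rmorph0. Qed.

Lemma adjmx_sum m n (I : finType) (F : I -> 'M[algC]_(m, n)) :
  adjmx (\sum_i F i) = \sum_i adjmx (F i).
Proof.
apply/matrixP => i j; rewrite /adjmx !mxE !summxE rmorph_sum.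
by apply: eq_bigr => k _; rewrite !mxE.
Qed.

Definition ip k (u v : 'rV[algC]_k) : algC := (u *m adjmx v) 0 0.

Lemma norm2E k (v : 'rV[algC]_k) : norm2 v = ip v v.
Proof. by rewrite /norm2 /ip mxE; apply: eq_bigr => i _; rewrite adjmxE normCK. Qed.

Lemma ip_ge0 k (v : 'rV[algC]_k) : 0 <= ip v v.
Proof. by rewrite -norm2E; apply: sumr_ge0 => i _; rewrite exprn_ge0. Qed.

Lemma ip_eq0 k (v : 'rV[algC]_k) : ip v v = 0 -> v = 0.
Proof.
rewrite -norm2E /norm2 => /psumr_eq0P v0; apply/rowP => i; rewrite mxE.
have /eqP := v0 (fun j _ => exprn_ge0 2 (normr_ge0 _)) i isT.
by rewrite expf_eq0 /= normr_eq0 => /eqP.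
Qed.

Lemma ip_conj k (u v : 'rV[algC]_k) : ip v u = (ip u v)^*.
Proof. by rewrite /ip -adjmxE adjmxM adjmxK. Qed.

Lemma ipDl k (u1 u2 v : 'rV[algC]_k) : ip (u1 + u2) v = ip u1 v + ip u2 v.
Proof. by rewrite /ip mulmxDl mxE. Qed.

Lemma ipZl k c (u v : 'rV[algC]_k) : ip (c *: u) v = c * ip u v.
Proof. by rewrite /ip -scalemxAl mxE. Qed.

Lemma ipDr k (u v1 v2 : 'rV[algC]_k) : ip u (v1 + v2) = ip u v1 + ip u v2.
Proof. by rewrite /ip adjmxD mulmxDr mxE. Qed.

Lemma ipZr k c (u v : 'rV[algC]_k) : ip u (c *: v) = c^* * ip u v.
Proof. by rewrite /ip adjmxZ -scalemxAr mxE. Qed.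

Lemma ip0r k (u : 'rV[algC]_k) : ip u 0 = 0.
Proof. by rewrite /ip adjmx0 mulmx0 mxE. Qed.

Lemma ip_sumr k (I : finType) (F : I -> 'rV[algC]_k) u :
  ip u (\sum_i F i) = \sum_i ip u (F i).
Proof. by rewrite /ip adjmx_sum mulmx_sumr summxE. Qed.

Lemma ipMr k p (u : 'rV[algC]_k) (v : 'rV[algC]_p) (A : 'M[algC]_(p, k)) :
  ip u (v *m A) = ip (u *m adjmx A) v.
Proof. by rewrite /ip adjmxM mulmxA. Qed.

Lemma ipMM k p (x y : 'rV[algC]_k) (A B : 'M[algC]_(k, p)) c :
  A *m adjmx B = c%:M -> ip (x *m A) (y *m B) = c * ip x y.
Proof.
by move=> AB; rewrite /ip adjmxM mulmxA -(mulmxA x) AB mul_mx_scalar -scalemxAl mxE.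
Qed.

Lemma ip_Cauchy_Schwarz k (u v : 'rV[algC]_k) : `|ip u v| ^+ 2 <= ip u u * ip v v.
Proof.
have [/ip_eq0 ->|v_nz] := eqVneq (ip v v) 0.
  by rewrite ip0r normr0 expr0n /= mulr_ge0 ?ip_ge0.
set N := ip v v; set z := ip u v.
have N_gt0 : 0 < N by rewrite lt_def v_nz ip_ge0.
have N_real : N^* = N by apply/conj_Creal/ger0_real/ltW.
(* expand [0 <= |N u - z v|^2 = N (N |u|^2 - |z|^2)] *)
have := ip_ge0 (N *: u + (- z) *: v).
rewrite !ipDl !ipDr !ipZl !ipZr N_real rmorphN (ip_conj u v) -/z -/N.
have expand (c : algC) : N * (N * ip u u) + N * (- c * z) + (- z * (N * c) + - z * (- c * N))
                        = N * (N * ip u u - z * c) by ring.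
rewrite expand.
by rewrite pmulr_rge0 // subr_ge0 normCK [ip u u * N]mulrC.
Qed.

Lemma row_base_gram_unit m n (B : 'M[algC]_(m, n)) :
  row_free B -> B *m adjmx B \in unitmx.
Proof.
move=> B_free; rewrite -row_free_unit -kermx_eq0; apply/eqP/row_matrixP => i.
rewrite row0; set u := row i _.
have uBB : u *m (B *m adjmx B) = 0 by apply/sub_kermxP; exact: row_sub.
have : ip (u *m B) (u *m B) = 0 by rewrite /ip adjmxM mulmxA -(mulmxA u) uBB mul0mx mxE.
by move/ip_eq0/eqP; rewrite mulmx_free_eq0 // => /eqP.
Qed.

Lemma orth_proj_sub m n (X : 'M[algC]_(m, n)) (h : 'rV_n) :
  (h *m orth_proj X <= X)%MS.
Proof. by rewrite /orth_proj mulmxA (submx_trans (submxMl _ _)) ?eq_row_base. Qed.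

Lemma orth_proj_ip m n (X : 'M[algC]_(m, n)) (h v : 'rV_n) :
  (v <= X)%MS -> ip (h *m orth_proj X) v = ip h v.
Proof.
move=> vX; have /submxP [D ->] : (v <= row_base X)%MS by rewrite eq_row_base.
rewrite /ip /orth_proj /=; have B_free := row_base_free X; move: (row_base X) B_free => B B_free.
by rewrite adjmxM -!mulmxA (mulmxA B) mulKmx // row_base_gram_unit.
Qed.

Lemma norm2_orth_proj m n (X : 'M[algC]_(m, n)) (h : 'rV_n) :
  norm2 (h *m orth_proj X) = ip h (h *m orth_proj X).
Proof. by rewrite norm2E (orth_proj_ip _ (orth_proj_sub X h)). Qed.

Lemma orth_proj_Cauchy_Schwarz m n (X : 'M[algC]_(m, n)) (h v : 'rV_n) :
  (v <= X)%MS -> `|ip h v| ^+ 2 <= norm2 (h *m orth_proj X) * ip v v.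
Proof. by move=> vX; rewrite -(orth_proj_ip h vX) norm2E; apply: ip_Cauchy_Schwarz. Qed.

Lemma sub_sumsmx_genmxM (F : fieldType) r k m l (A : 'I_l -> 'M[F]_(r, k))
    (B : 'I_l -> 'M[F]_(k, m)) (q : 'rV[F]_m) :
  (q <= \sum_j <<A j *m B j>>)%MS ->
  exists2 w : 'I_l -> 'rV_k, forall j, (w j <= A j)%MS & q = \sum_j w j *m B j.
Proof.
case/sub_sumsmxP => u ->.
exists (fun j => u j *m <<A j *m B j>>%MS *m pinvmx (A j *m B j) *m A j).
  by move=> j; apply: submxMl.
apply: eq_bigr => j _; rewrite -mulmxA mulmxKpV //.
by apply: submx_trans (submxMl _ _) _; rewrite genmxE.
Qed.

Lemma two_mul_le_AMGM (R : numFieldType) (a s z e k : R) :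
  0 < a -> 0 <= s -> 0 <= z -> 0 <= e -> 0 <= k -> z ^+ 2 <= e * k ->
  s * z + s * z <= s ^+ 2 / a * e + a * k.
Proof.
move=> a_gt0 s_ge0 z_ge0 e_ge0 k_ge0 zek.
set A := s ^+ 2 / a * e; set B := a * k.
have A_ge0 : 0 <= A by rewrite !mulr_ge0 ?invr_ge0 ?exprn_ge0 // ltW.
have B_ge0 : 0 <= B by rewrite mulr_ge0 // ltW.
rewrite -(ler_pXn2r (n := 2)) ?nnegrE ?addr_ge0 // ?mulr_ge0 //.
have -> : (s * z + s * z) ^+ 2 = 4 * (s ^+ 2 * z ^+ 2) by ring.
have AB : A * B = s ^+ 2 * (e * k) by rewrite /A /B; field; rewrite gt_eqF.
have -> : (A + B) ^+ 2 = 4 * (A * B) + (A - B) ^+ 2 by ring.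
rewrite AB (@le_trans _ _ (4 * (s ^+ 2 * (e * k)))) ?ler_wpM2l ?exprn_ge0 //.
by rewrite lerDl -realEsqr rpredB ?ger0_real.
Qed.

Lemma one_sub_div_le (R : numFieldType) (a b : R) :
  0 < a -> a <= b -> (1 - b) / b <= (1 - a) / a.
Proof.
move=> a_gt0 ab; have b_gt0 := lt_le_trans a_gt0 ab.
rewrite !mulrBl !mul1r !divff ?gt_eqF // lerD2r.
by rewrite ler_pV2 ?inE ?unitfE ?gt_eqF ?a_gt0 ?b_gt0.
Qed.

Lemma conj_sqrtC (x : algC) : 0 <= x -> (sqrtC x)^* = sqrtC x.
Proof. by move=> x_ge0; apply/conj_Creal/ger0_real; rewrite sqrtC_ge0. Qed.

Section TiltedSpan.

Variables (n m l : nat) (E : 'M[algC]_(n, m)) (T : 'I_l -> 'M[algC]_(n, m)).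
Variable alpha : 'I_l -> algC.
Hypotheses (hE : isometry_mx E) (hT : forall j, isometry_mx (T j)).
Hypothesis hET : forall j, E *m adjmx (T j) = 0.
Hypothesis hTT : forall i j, i != j -> T i *m adjmx (T j) = 0.
Hypotheses (alpha_ge0 : forall j, 0 <= alpha j) (alpha_le1 : forall j, alpha j <= 1).

Local Notation G j := (tilted_map E (T j) (alpha j)).
Local Notation S W := (tilted_span E T alpha W).

Let one_sub_alpha_ge0 j : 0 <= 1 - alpha j.
Proof. by rewrite subr_ge0. Qed.

Lemma tilted_map_gram i j :
  G i *m adjmx (G j) = (sqrtC (1 - alpha i) * sqrtC (1 - alpha j)
                        + (i == j)%:R * (sqrtC (alpha i) * sqrtC (alpha j)))%:M.
Proof.
have TE : T i *m adjmx E = 0 by rewrite -[T i]adjmxK -adjmxM hET adjmx0.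
have TT : T i *m adjmx (T j) = ((i == j)%:R)%:M.
  by have [<-|/hTT ->] := eqVneq i j; rewrite ?hT ?raddf0.
rewrite /tilted_map adjmxD !adjmxZ !conj_sqrtC // mulmxDl !mulmxDr.
rewrite -!scalemxAl -!scalemxAr !scalerA hE hET TE TT !scaler0 !addr0 add0r.
by rewrite !scale_scalar_mx -raddfD /= mulr1 [_ * (i == j)%:R]mulrC.
Qed.

Lemma tilted_map_isometry j : isometry_mx (G j).
Proof. by rewrite /isometry_mx tilted_map_gram eqxx mul1r -!expr2 !sqrtCK subrK. Qed.

Lemma ip_tilted_map (h w : 'rV_n) j :
  ip (h *m E) (w *m G j) = sqrtC (1 - alpha j) * ip h w.
Proof.
have EG : E *m adjmx (G j) = (sqrtC (1 - alpha j))%:M.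
  rewrite /tilted_map adjmxD !adjmxZ !conj_sqrtC // mulmxDr -!scalemxAr.
  by rewrite hE hET scaler0 addr0 scalemx1.
by rewrite ipMr -mulmxA EG mul_mx_scalar ipZl.
Qed.

Lemma tilted_span_proj_ge W (h : 'rV_n) j :
  (1 - alpha j) * norm2 (h *m orth_proj (W j))
    <= norm2 (h *m E *m orth_proj (S W)).
Proof.
set eps := norm2 _; set v := h *m orth_proj (W j) *m G j.
have vS : (v <= S W)%MS.
  apply: submx_trans (submxMr _ (orth_proj_sub _ _)) _.
  by apply: (sumsmx_sup j) => //; rewrite genmxE.
have hEv : ip (h *m E) v = sqrtC (1 - alpha j) * eps.
  by rewrite ip_tilted_map /eps norm2_orth_proj.
have vv : ip v v = eps by rewrite (ipMM _ _ (tilted_map_isometry j)) mul1r -norm2E.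
have := orth_proj_Cauchy_Schwarz (h *m E) vS.
rewrite hEv vv normrM exprMn ger0_norm ?sqrtC_ge0 // sqrtCK.
have eps_ge0 : 0 <= eps by rewrite /eps norm2E ip_ge0.
rewrite ger0_norm // expr2 mulrA.
have [-> _|eps_nz] := eqVneq eps 0; first by rewrite mulr0 norm2E ip_ge0.
by rewrite ler_pM2r // lt_def eps_nz.
Qed.

Lemma ip_sum_tilted (w : 'I_l -> 'rV_n) :
  let q := \sum_j w j *m G j in let x := \sum_j sqrtC (1 - alpha j) *: w j in
  ip q q = ip x x + \sum_j alpha j * ip (w j) (w j).
Proof.
move=> q x; have qG i : q *m adjmx (G i) = sqrtC (1 - alpha i) *: x + alpha i *: w i.
  rewrite mulmx_suml.
  under eq_bigr do rewrite -mulmxA tilted_map_gram mul_mx_scalar scalerDl.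
  rewrite big_split /=; congr (_ + _).
    by rewrite /x scaler_sumr; apply: eq_bigr => j _; rewrite scalerA mulrC.
  rewrite (bigD1 i) //= eqxx mul1r -expr2 sqrtCK big1 ?addr0 // => j /negbTE ->.
  by rewrite mul0r scale0r.
rewrite {2}/q ip_sumr.
under eq_bigr do rewrite ipMr qG ipDl !ipZl.
rewrite big_split /=; congr (_ + _).
rewrite {2}/x ip_sumr; apply: eq_bigr => j _.
by rewrite ipZr conj_sqrtC // (ip_conj (w j) x) (ip_conj x (w j)).
Qed.

Lemma tilted_span_proj_le W (h : 'rV_n) : (forall j, 0 < alpha j) ->
  norm2 (h *m E *m orth_proj (S W))
    <= \sum_j (1 - alpha j) / alpha j * norm2 (h *m orth_proj (W j)).
Proof.
move=> alpha_gt0; have [w wW qE] := sub_sumsmx_genmxM (orth_proj_sub (S W) (h *m E)).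
set q := h *m E *m orth_proj (S W) in qE *; rewrite norm2E.
have p_lin : ip q q = \sum_j sqrtC (1 - alpha j) * ip h (w j).
  have qS : (q <= S W)%MS := orth_proj_sub _ _.
  rewrite {1}/q (orth_proj_ip _ qS) qE ip_sumr.
  by apply: eq_bigr => j _; rewrite ip_tilted_map.
have p_quad : \sum_j alpha j * ip (w j) (w j) <= ip q q.
  by rewrite qE ip_sum_tilted lerDr ip_ge0.
have AMGM j : sqrtC (1 - alpha j) * `|ip h (w j)| + sqrtC (1 - alpha j) * `|ip h (w j)|
    <= (1 - alpha j) / alpha j * norm2 (h *m orth_proj (W j)) + alpha j * ip (w j) (w j).
  rewrite -[in X in X / _](sqrtCK (1 - alpha j)).
  apply: two_mul_le_AMGM; rewrite ?sqrtC_ge0 ?normr_ge0 ?norm2E ?ip_ge0 //.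
  by rewrite -norm2E orth_proj_Cauchy_Schwarz.
have p_abs : ip q q <= \sum_j sqrtC (1 - alpha j) * `|ip h (w j)|.
  rewrite -(ger0_norm (ip_ge0 q)) {1}p_lin (le_trans (ler_norm_sum _ _ _)) //.
  by apply: ler_sum => j _; rewrite normrM ger0_norm ?sqrtC_ge0.
rewrite -(lerD2r (ip q q)) (le_trans (lerD p_abs p_abs)) // -big_split /=.
by rewrite (le_trans (ler_sum _ (fun j _ => AMGM j))) // big_split /= lerD2l.
Qed.

End TiltedSpan.

(* The bounds are homogeneous of degree 2 in [h]. *)
Theorem proposition2
  (n l : nat) (l_gt0 : (0 < l)%N)
  (E : 'M[algC]_(n, n * l.+1)) (T : 'I_l -> 'M[algC]_(n, n * l.+1))
  (hE : isometry_mx E)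
  (hT : forall j, isometry_mx (T j))
  (hET : forall j, E *m adjmx (T j) = 0)
  (hTT : forall i j, i != j -> T i *m adjmx (T j) = 0)
  (h : 'rV[algC]_n) (h_unit : norm2 h = 1)
  (W : 'I_l -> 'M[algC]_n)
  (alpha : 'I_l -> algC) (alpha_pos : forall j, 0 < alpha j)
  (alpha_lt1 : forall j, alpha j < 1)
  (a : algC) (a_attained : exists j, a = alpha j)
  (a_min : forall j, a <= alpha j) :
  let eps := fun j => norm2 (h *m orth_proj (W j)) in
  let p := norm2 ((h *m E) *m orth_proj (tilted_span E T alpha W)) in
  (forall j, (1 - alpha j) * eps j <= p) /\
  p <= (1 - a) / a * \sum_(j < l) eps j.
Proof.
move=> eps p.
have alpha_ge0 j : 0 <= alpha j by exact: ltW.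
have alpha_le1 j : alpha j <= 1 by exact: ltW.
have a_gt0 : 0 < a by case: a_attained => j ->.
split=> [j|]; first exact: tilted_span_proj_ge.
apply: le_trans (tilted_span_proj_le hE hT hET hTT alpha_ge0 alpha_le1 W h alpha_pos) _.
rewrite mulr_sumr; apply: ler_sum => j _.
by rewrite ler_wpM2r ?one_sub_div_le // norm2E ip_ge0.
Qed.
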